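(* Let $(\xi_i,\mathcal{F}_i)_{i=0,\dots,n}$ be a sequence of real-valued martingale differences (with $\mathbf{E}[\xi_i\mid\mathcal{F}_{i-1}]=0$). Let $p\ge2$ and assume $\mathbf{E}[|\xi_i|^p]<\infty$ for all $i\in[1,n]$. For $y>0$ set $\eta_i=\xi_i\mathbf{1}_{\{\xi_i\le y\}}$. Then for all $\lambda>0$ and $i\in[1,n]$, $$\mathbf{E}[e^{\lambda\eta_i}\mid\mathcal{F}_{i-1}]\le1+\frac12e^p\lambda^2\,\mathbf{E}[\xi_i^2\mid\mathcal{F}_{i-1}]+f(y)\,\mathbf{E}[(\xi_i^+)^p\mid\mathcal{F}_{i-1}],$$ where $f(u)=\dfrac{e^{\lambda u}-1-\lambda u}{u^p}$ for $u>0$.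
   Context: $x^+=\max\{x,0\}$. *)

From HB Require Import structures.
From mathcomp Require Import all_boot all_order all_algebra.
From mathcomp Require Import all_classical all_reals all_analysis.
Set Implicit Arguments. Unset Strict Implicit. Unset Printing Implicit Defensive.
Import Order.TTheory GRing.Theory Num.Theory.
Local Open Scope classical_set_scope.
Local Open Scope ring_scope.

Section Defs.
Context {d : measure_display} {T : measurableType d} {R : realType}.

Definition sub_sigma (G : set (set T)) : Prop :=
  sigma_algebra setT G /\ G `<=` measurable.

Definition measurable_wrt (G : set (set T)) (f : T -> R) : Prop :=
  forall B : set R, measurable B -> G (f @^-1` B).

Definition is_cond_exp (P : probability T R) (G : set (set T))
  (X Y : T -> R) : Prop :=
  [/\ measurable_wrt G Y,
      P.-integrable setT (EFin \o Y) &
      forall A, G A -> (\int[P]_(x in A) (Y x)%:E = \int[P]_(x in A) (X x)%:E)%E].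

Definition trunc (y : R) (xi : T -> R) : T -> R :=
  fun x => if xi x <= y then xi x else 0.

End Defs.

Definition fdef {R : realType} (lambda p u : R) : R :=
  (expR (lambda * u) - 1 - lambda * u) / u `^ p.

From HB Require Import structures.
From mathcomp Require Import all_boot all_order all_algebra.
From mathcomp Require Import all_classical all_reals all_analysis.
From mathcomp Require Import ring lra measurable_realfun.
Import Order.TTheory GRing.Theory Num.Theory.
Local Open Scope classical_set_scope.
Local Open Scope ring_scope.

(* Bound exp(lambda eta) pointwise by distinguishing where xi lies. If xi > y then
   eta = 0. If xi <= 0, exp x <= 1 + x + x^2/2. If 0 < lambda xi <= p, then
   exp x - 1 - x <= x^2/2 exp x <= x^2/2 exp p. If lambda xi > p, f is nondecreasing
   from there on, so exp(lambda xi) - 1 - lambda xi = f(xi) xi^p <= f(y) (xi^+)^p.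
   Altogether exp(lambda eta) <= 1 + lambda xi + e^p lambda^2 xi^2 / 2 + f(y) (xi^+)^p,
   and conditional expectations, being linear and monotone, turn this into the
   claim, the term lambda xi vanishing since xi is a martingale difference. *)

Section real_bounds.
Context {R : realType}.

Lemma derive_ge0_le (f df : R -> R) (a b : R) : a <= b ->
  (forall t, a <= t <= b -> is_derive t 1 f (df t)) ->
  (forall t, a < t < b -> 0 <= df t) -> f a <= f b.
Proof.
move=> ab fdf df0.
have fdf_oo t : t \in `]a, b[ -> is_derive t 1 f (df t).
  by rewrite in_itv /= => /andP[/ltW ta /ltW tb]; apply: fdf; rewrite ta tb.
apply: (@ger0_derive1_le_cc R f a b); rewrite ?in_itv /= ?lexx ?ab //.
- by move=> t /fdf_oo [].
- move=> t tab; have := fdf_oo t tab => ?.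
  by rewrite derive1E derive_val df0 // -in_itv.
- apply: derivable_within_continuous => t; rewrite in_itv /= => tab.
  by have [] := fdf t tab.
Qed.

Lemma expR_le_quadratic {x : R} : x <= 0 -> expR x <= 1 + x + x ^+ 2 / 2.
Proof.
move=> x0; pose f (t : R) := expR t - (1 + t + t ^+ 2 / 2).
suff : f x <= f 0 by rewrite /f expR0; lra.
apply: (@derive_ge0_le f (fun t => - (1 + t - expR t))) => // [t _|t /andP[_ t0]].
  rewrite (_ : f = @expR R - (cst 1 + @id R + (2^-1 : R) \*: @id R ^+ 2)); last first.
    by apply/funext => u; rewrite /f /= mulrC.
  by apply: is_derive_eq; rewrite expr1 /= add0r /GRing.scale /= mulr1; field.
by have := expR_ge1Dx t; lra.
Qed.

Lemma expR_sub1_sub_le {x : R} : 0 <= x -> expR x - 1 - x <= x ^+ 2 / 2 * expR x.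
Proof.
move=> x0; pose f (t : R) := t ^+ 2 / 2 - 1 + expR (- t) * (1 + t).
have : f 0 <= f x.
  apply: (@derive_ge0_le f (fun t => t * (1 - expR (- t)))) => // [t _|t /andP[t0 _]].
    rewrite (_ : f = (2^-1 : R) \*: @id R ^+ 2 - cst 1 + (@expR R \o -%R) * (cst 1 + @id R)).
      apply: is_derive_eq; rewrite expr1 /= add0r /GRing.scale /= mulr1.
      by rewrite -[(cst 1 + _) t]/(1 + t); field.
    by apply/funext => u; rewrite /f /= mulrC.
  by apply: mulr_ge0; [exact: ltW | rewrite subr_ge0 expR_le1 oppr_le0 ltW].
rewrite /f oppr0 expR0 => fx.
have := expRxMexpNx_1 x; have := expR_gt0 x; nra.
Qed.

Lemma fdef_le {lambda p u v : R} : 0 < lambda -> 0 < p ->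
  p <= lambda * u -> u <= v -> fdef lambda p u <= fdef lambda p v.
Proof.
move=> l0 p0 pu uv; rewrite /fdef -!powRN.
have u0 : 0 < u by rewrite -(pmulr_rgt0 _ l0) (lt_le_trans p0).
pose g (t : R) := expR (lambda * t) - 1 - lambda * t.
pose h (t : R) := g t * t `^ (-p).
rewrite -/(g u) -/(g v) -/(h u) -/(h v).
apply: (@derive_ge0_le h (fun t =>
  (lambda * expR (lambda * t) - lambda) * t `^ (-p) + g t * (- p * t `^ (-p - 1))) u v uv).
- move=> t /andP[ut _].
  have := is_derive1_powR (-p) (lt_le_trans u0 ut).
  rewrite (_ : h = (@expR R \o lambda \*: id - cst 1 - lambda \*: id) * (@powR R)^~ (-p)) //.
  move=> ?; apply: is_derive_eq.
  rewrite /GRing.scale /= !mulr1 -[(_ - cst 1 - _) t]/(g t) /g; ring.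
- move=> t /andP[ut _]; have t0 := lt_trans u0 ut.
  have pt : p <= lambda * t by rewrite (le_trans pu) // ler_pM2l // ltW.
  have e1 : 1 <= expR (lambda * t) by rewrite -expR0 ler_expR (le_trans (ltW p0)).
  have -> : t `^ (-p) = t * t `^ (-p - 1).
    rewrite -{2}(powRr1 (ltW t0)) -powRD; first by congr (_ `^ _); ring.
    by rewrite (gt_eqF t0) implybT.
  (* the derivative is t^(-p-1) ((exp(lambda t) - 1) (lambda t - p) + p lambda t) *)
  have h1 : 0 <= (expR (lambda * t) - 1) * (lambda * t - p).
    by apply: mulr_ge0; rewrite subr_ge0.
  have h2 : 0 <= p * (lambda * t) by rewrite mulr_ge0 // ltW // (lt_le_trans p0).
  have := mulr_ge0 (powR_ge0 t (-p - 1)) (addr_ge0 h1 h2).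
  by rewrite /g; nra.
Qed.

Lemma expR_trunc_le {lambda p y : R} (u : R) : 0 < lambda -> 0 < p -> 0 < y ->
  expR (lambda * (if u <= y then u else 0)) <=
  1 + lambda * u + 2^-1 * expR p * lambda ^+ 2 * u ^+ 2
    + fdef lambda p y * Num.max u 0 `^ p.
Proof.
move=> l0 p0 y0; set C := 2^-1 * expR p * lambda ^+ 2.
have fy0 : 0 <= fdef lambda p y.
  by rewrite divr_ge0 ?powR_ge0 //; have := expR_ge1Dx (lambda * y); lra.
have ep : 1 <= expR p by rewrite -expR0 ler_expR ltW.
have sq0 : 0 <= (lambda * u) ^+ 2 := sqr_ge0 _.
have Cu : C * u ^+ 2 = expR p * ((lambda * u) ^+ 2 / 2) by rewrite /C exprMn; ring.
have Cu0 : 0 <= C * u ^+ 2 by rewrite Cu mulr_ge0 ?divr_ge0 ?expR_ge0.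
have fM0 : 0 <= fdef lambda p y * Num.max u 0 `^ p by rewrite mulr_ge0 ?powR_ge0.
have [yu|uy] := ltP y u.
  by rewrite mulr0 expR0; have := mulr_ge0 (ltW l0) (ltW (lt_trans y0 yu)); lra.
have [u0|u0] := leP u 0.
  rewrite powR0 ?gt_eqF // mulr0 addr0.
  have := expR_le_quadratic (mulr_ge0_le0 (ltW l0) u0).
  have := ler_wpM2r (divr_ge0 sq0 (ler0n R 2)) ep; rewrite mul1r; lra.
have [lup|plu] := leP (lambda * u) p.
  have := expR_sub1_sub_le (mulr_ge0 (ltW l0) (ltW u0)).
  have : expR (lambda * u) <= expR p by rewrite ler_expR.
  move=> /(ler_wpM2l (divr_ge0 sq0 (ler0n R 2))).
  by rewrite Cu; have := mulr_ge0 fy0 (powR_ge0 u p); lra.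
have := fdef_le l0 p0 (ltW plu) uy.
by rewrite /fdef ler_pdivrMr ?powR_gt0 // mulrAC; lra.
Qed.

End real_bounds.

Section measurable_wrt.
Context {d : measure_display} {T : measurableType d} {R : realType}.
Variable G : set (set T).
Hypothesis sG : sigma_algebra setT G.

Lemma measurable_wrtP (f : T -> R) :
  measurable_wrt G f <-> measurable_fun (setT : set (g_sigma_algebraType G)) f.
Proof.
split=> [mf _ B mB | mf B mB].
  by rewrite setTI measurable_g_measurableTypeE //; exact: mf.
by have := mf measurableT B mB; rewrite setTI measurable_g_measurableTypeE.
Qed.

Lemma measurable_wrt_cst (c : R) : measurable_wrt G (cst c).
Proof. by apply/measurable_wrtP; exact: measurable_cst. Qed.

Lemma measurable_wrtD (f g : T -> R) :
  measurable_wrt G f -> measurable_wrt G g -> measurable_wrt G (f \+ g).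
Proof.
by move=> /measurable_wrtP mf /measurable_wrtP mg; exact/measurable_wrtP/measurable_funD.
Qed.

Lemma measurable_wrtZ (a : R) (f : T -> R) :
  measurable_wrt G f -> measurable_wrt G (fun x => a * f x).
Proof.
move=> /measurable_wrtP mf.
by apply/measurable_wrtP/measurable_funM => //; exact: measurable_cst.
Qed.

Lemma measurable_wrtB (f g : T -> R) :
  measurable_wrt G f -> measurable_wrt G g -> measurable_wrt G (f \- g).
Proof.
by move=> /measurable_wrtP mf /measurable_wrtP mg; exact/measurable_wrtP/measurable_funB.
Qed.

End measurable_wrt.

Section integrable_EFin.
Context {d : measure_display} {T : measurableType d} {R : realType}.
Context {mu : measure T R} {D : set T}.
Hypothesis mD : measurable D.

Lemma integrableD_EFin {f g : T -> R} :
  mu.-integrable D (EFin \o f) -> mu.-integrable D (EFin \o g) ->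
  mu.-integrable D (EFin \o (f \+ g)).
Proof.
move=> iff ig; rewrite (_ : _ \o _ = (EFin \o f) \+ (EFin \o g)).
  exact: integrableD.
by apply/funext => x; rewrite /= EFinD.
Qed.

End integrable_EFin.

Lemma measurable_trunc {d : measure_display} {T : measurableType d} {R : realType}
    (y : R) (f : T -> R) :
  measurable_fun setT f -> measurable_fun setT (trunc y f).
Proof.
move=> mf.
apply: (measurable_fun_ifT (f := fun x => f x <= y) (g := f) (h := cst 0)) => //.
by apply: measurable_fun_ler => //; exact: measurable_cst.
Qed.

Section cond_exp.
Context {d : measure_display} {T : measurableType d} {R : realType}.
Context {P : probability T R} {G : set (set T)}.
Hypothesis GS : sub_sigma G.

Let sG : sigma_algebra setT G := GS.1.
Let GM : G `<=` measurable := GS.2.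

Lemma sub_sigmaT : G setT.
Proof. by case: sG => G0 GC _; have := GC _ G0; rewrite setD0. Qed.

Lemma measurable_wrt_measurable {f : T -> R} :
  measurable_wrt G f -> measurable_fun setT f.
Proof. by move=> mf _ B mB; rewrite setTI; exact/GM/mf. Qed.

Lemma integrable_sub_sigma (A : set T) (f : T -> \bar R) :
  G A -> P.-integrable setT f -> P.-integrable A f.
Proof. by move=> GA; apply: integrableS measurableT (GM _ GA) (subsetT A). Qed.

Lemma is_cond_exp_integrable {f g : T -> R} :
  measurable_fun setT f -> (forall x, 0 <= f x) ->
  is_cond_exp P G f g -> P.-integrable setT (EFin \o f).
Proof.
move=> mf f0 [_ ig gf]; apply/integrableP; split; first exact/measurable_EFinP.
under eq_integral do rewrite /= ger0_norm //.
rewrite -gf; last exact: sub_sigmaT.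
move/integrableP : ig => [mg ig].
apply: le_lt_trans ig; apply: le_trans (le_abse_integral _ _ mg) => //.
exact: lee_abs.
Qed.

Lemma is_cond_exp_cst (c : R) : is_cond_exp P G (cst c) (cst c).
Proof.
split => //; first exact: measurable_wrt_cst.
exact: finite_measure_integrable_cst.
Qed.

Lemma is_cond_expD {f1 f2 g1 g2 : T -> R} :
  P.-integrable setT (EFin \o f1) -> P.-integrable setT (EFin \o f2) ->
  is_cond_exp P G f1 g1 -> is_cond_exp P G f2 g2 ->
  is_cond_exp P G (f1 \+ f2) (g1 \+ g2).
Proof.
move=> if1 if2 [mg1 ig1 gf1] [mg2 ig2 gf2]; split.
- exact: measurable_wrtD.
- exact: integrableD_EFin.
- move=> A GA; under eq_integral do rewrite /= EFinD.
  under [X in _ = X]eq_integral do rewrite /= EFinD.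
  rewrite !integralD ?gf1 ?gf2 //; try exact: GM; exact: integrable_sub_sigma.
Qed.

Lemma is_cond_expZ (a : R) {f g : T -> R} :
  P.-integrable setT (EFin \o f) -> is_cond_exp P G f g ->
  is_cond_exp P G (fun x => a * f x) (fun x => a * g x).
Proof.
move=> iff [mg ig gf]; split.
- exact: measurable_wrtZ.
- exact: (integrableZl measurableT a ig).
- move=> A GA; under eq_integral do rewrite EFinM.
  under [X in _ = X]eq_integral do rewrite EFinM.
  rewrite !integralZl ?gf //; try exact: GM; exact: integrable_sub_sigma.
Qed.

Lemma ae_le_of_integral_le {g h : T -> R} :
  measurable_wrt G g -> measurable_wrt G h ->
  P.-integrable setT (EFin \o g) -> P.-integrable setT (EFin \o h) ->
  (forall A, G A -> (\int[P]_(x in A) (g x)%:E <= \int[P]_(x in A) (h x)%:E)%E) ->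
  {ae P, forall x, g x <= h x}.
Proof.
move=> mg mh ig ih gh.
pose B := [set x | h x < g x].
have GB : G B.
  rewrite (_ : B = (h \- g) @^-1` [set` `]-oo, 0[%R]); first exact: measurable_wrtB.
  by apply/seteqP; split => x /=; rewrite in_itv /= subr_lt0.
have mB := GM _ GB.
have mhgB : measurable_fun B (fun x => (h x - g x)%:E).
  apply/measurable_EFinP/(measurable_funS measurableT (subsetT B)).
  by apply: measurable_funB; exact: measurable_wrt_measurable.
have : (\int[P]_(x in B) `|(h x - g x)%:E| = 0)%E.
  apply/eqP; rewrite eq_le integral_ge0 ?andbT //.
  rewrite (eq_integral (fun x => (g x)%:E - (h x)%:E)%E); last first.
    move=> x; rewrite inE /B /= => hg.
    by rewrite -EFinD ltr0_norm ?subr_lt0 // opprB.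
  by rewrite integralB // ?sube_le0 ?gh //; exact: integrable_sub_sigma.
move=> /(ae_eq_integral_abs P mB mhgB); apply: filterS => x hg0.
rewrite leNgt; apply/negP => hg; have := hg0 hg; rewrite /= => -[].
by apply/eqP; rewrite subr_eq0 lt_eqF.
Qed.

Lemma is_cond_exp_le {f1 f2 g1 g2 : T -> R} :
  P.-integrable setT (EFin \o f1) -> P.-integrable setT (EFin \o f2) ->
  (forall x, f1 x <= f2 x) ->
  is_cond_exp P G f1 g1 -> is_cond_exp P G f2 g2 ->
  {ae P, forall x, g1 x <= g2 x}.
Proof.
move=> if1 if2 f12 [mg1 ig1 gf1] [mg2 ig2 gf2].
apply: ae_le_of_integral_le => // A GA; rewrite gf1 // gf2 //.
apply: le_integral => //; try exact: integrable_sub_sigma; first exact: GM.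
by move=> x _; rewrite lee_fin.
Qed.

End cond_exp.

Theorem lemma5p1 (d : measure_display) (T : measurableType d) (R : realType)
  (P : probability T R) (n : nat) (F : nat -> set (set T))
  (xi : nat -> T -> R) (p y lambda : R) :
  (forall i, sub_sigma (F i)) ->
  (forall i j, (i <= j)%N -> F i `<=` F j) ->
  (forall i, (i <= n)%N -> measurable_wrt (F i) (xi i)) ->
  (forall i, (i <= n)%N -> P.-integrable setT (EFin \o xi i)) ->
  (forall i, (1 <= i <= n)%N -> is_cond_exp P (F i.-1) (xi i) (cst 0)) ->
  2 <= p ->
  (forall i, (1 <= i <= n)%N ->
     (\int[P]_x (`|xi i x| `^ p)%:E < +oo)%E) ->
  0 < y -> 0 < lambda ->
  forall i, (1 <= i <= n)%N ->
  forall g1 g2 g3 : T -> R,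
    is_cond_exp P (F i.-1) (fun x => expR (lambda * trunc y (xi i) x)) g1 ->
    is_cond_exp P (F i.-1) (fun x => xi i x ^+ 2) g2 ->
    is_cond_exp P (F i.-1) (fun x => (Num.max (xi i x) 0) `^ p) g3 ->
    {ae P, forall x,
       g1 x <= 1 + 2^-1 * expR p * lambda ^+ 2 * g2 x + fdef lambda p y * g3 x}.
Proof.
move=> Fsub _ xi_meas xi_int xi_mart p2 _ y0 l0 i i1n g1 g2 g3 ceE ceQ ceM.
have iX := xi_int i (andP i1n).2.
have mX := measurable_wrt_measurable (Fsub i) (xi_meas i (andP i1n).2).
have GS := Fsub i.-1.
have p0 : 0 < p by apply: lt_le_trans p2.
set C := 2^-1 * expR p * lambda ^+ 2; set K := fdef lambda p y.
have mE : measurable_fun setT (fun x => expR (lambda * trunc y (xi i) x)).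
  apply: measurableT_comp => //; apply: measurable_funM => //.
  exact: measurable_trunc.
have mQ : measurable_fun setT (fun x => xi i x ^+ 2) by exact: measurable_funX.
have mM : measurable_fun setT (fun x => Num.max (xi i x) 0 `^ p).
  by apply: (measurableT_comp (measurable_powR p)); exact: measurable_maxr.
have iE := is_cond_exp_integrable GS mE (fun _ => expR_ge0 _) ceE.
have iQ := is_cond_exp_integrable GS mQ (fun _ => sqr_ge0 _) ceQ.
have iM := is_cond_exp_integrable GS mM (fun _ => powR_ge0 _ _) ceM.
have i1 := finite_measure_integrable_cst P 1 (measurableT : measurable setT).
have iZ a f := integrableZl (mu := P) measurableT a (f := EFin \o f).
have ce1X := is_cond_expD GS i1 (iZ lambda _ iX) (is_cond_exp_cst GS 1)
  (is_cond_expZ GS lambda iX (xi_mart i i1n)).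
have i1X := integrableD_EFin measurableT i1 (iZ lambda _ iX).
have ce1XQ := is_cond_expD GS i1X (iZ C _ iQ) ce1X (is_cond_expZ GS C iQ ceQ).
have i1XQ := integrableD_EFin measurableT i1X (iZ C _ iQ).
have ceRHS := is_cond_expD GS i1XQ (iZ K _ iM) ce1XQ (is_cond_expZ GS K iM ceM).
have iRHS := integrableD_EFin measurableT i1XQ (iZ K _ iM).
have bound x : expR (lambda * trunc y (xi i) x) <=
    1 + lambda * xi i x + C * xi i x ^+ 2 + K * Num.max (xi i x) 0 `^ p.
  exact: expR_trunc_le.
have := is_cond_exp_le GS iE iRHS bound ceE ceRHS.
by apply: filterS => x; rewrite /= mulr0 addr0.
Qed.
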